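(* Let $\mathcal G=(\mathcal V,\mathcal E,w)$ be a finite, undirected, connected graph with $n$ vertices and positive edge weights, and let $L$ be its Laplacian matrix. Let $w^*>0$ be a real number that is the weight of at least one $(m,k)$-star of $\mathcal G$. Let $\mathcal S_{w^*}$ be the set of all $(m,k)$-stars of $\mathcal G$ (as $m,k$ range over the positive integers with $m+k\le n$) whose weight is defined and equals $w^*$, and let $\deg(\mathcal S_{w^*})=\sum_{S_{m,k}\in\mathcal S_{w^*}}(m-1)$. Then $w^*$ is an eigenvalue of $L$ and its algebraic multiplicity as an eigenvalue of $L$ is at least $\deg(\mathcal S_{w^*})$.
   Context: Weighted adjacency matrix: $A_{ij}=w(i,j)$ if $\{i,j\}\in\mathcal E$ and $A_{ij}=0$ otherwise (no loops). The strength of a vertex $i$ is $s(i)=\sum_j A_{ij}$. The Laplacian is $L=D-A$ with $D=\mathrm{diag}(s(1),\dots,s(n))$. An $(m,k)$-star of $\mathcal G$, denoted $S_{m,k}$, is a pair $(\mathcal V_1,\mathcal V_2)$ of disjoint vertex sets with $|\mathcal V_1|=m\ge 2$, $|\mathcal V_2|=k$, such that every vertex of $\mathcal V_1$ is adjacent to every vertex of $\mathcal V_2$ and to no vertex outside $\mathcal V_2$ (so $\mathcal V_1$ is independent); the sets are uniquely determined, i.e. $\mathcal V_1$ is the set of all vertices of $\mathcal G$ whose neighbourhood is exactly $\mathcal V_2$ (so distinct $(m,k)$-stars have disjoint sets $\mathcal V_1$). Its degree is $m-1$. Its weight is defined only when $w(i,j)=w(i',j)$ for all $i,i'\in\mathcal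 V_1$ and all $j\in\mathcal V_2$, and then equals $\sum_{j\in\mathcal V_2}w(i,j)$ for any $i\in\mathcal V_1$. *)

From HB Require Import structures.
From mathcomp Require Import all_boot all_order all_algebra.
Set Implicit Arguments. Unset Strict Implicit. Unset Printing Implicit Defensive.
Import Order.TTheory GRing.Theory Num.Theory.
Local Open Scope ring_scope.

(* A weighted graph on vertex set 'I_n is given by its weighted adjacency
   matrix A : A i j = w(i,j) if {i,j} is an edge, 0 otherwise. *)
Section Graph.
Variables (R : realFieldType) (n : nat).
Implicit Types (A : 'M[R]_n).

Definition adj A : rel 'I_n := fun i j => A i j != 0.

Definition nbhd A (i : 'I_n) : {set 'I_n} := [set j | A i j != 0].

Definition strength A (i : 'I_n) : R := \sum_j A i j.

Definition laplacian A : 'M[R]_n :=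
  \matrix_(i, j) ((if i == j then strength A i else 0) - A i j).

(* V1 of the star with centre set V2: all vertices whose neighbourhood is
   exactly V2 (it is uniquely determined by V2). *)
Definition starV1 A (V2 : {set 'I_n}) : {set 'I_n} := [set i | nbhd A i == V2].

(* V2 is the centre set of an (m,k)-star with m = #|starV1 A V2| >= 2,
   k = #|V2| >= 1 (m + k <= n holds automatically since A has no loops). *)
Definition is_star A (V2 : {set 'I_n}) : bool := (0 < #|V2|)%N && (1 < #|starV1 A V2|)%N.

Definition star_weight_defined A (V2 : {set 'I_n}) : bool :=
  [forall i in starV1 A V2, forall i' in starV1 A V2,
     forall j in V2, A i j == A i' j].

(* the weight: sum_{j in V2} w(i,j) for (any, here a chosen) i in V1 *)
Definition star_weight A (V2 : {set 'I_n}) : R :=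
  if [pick i in starV1 A V2] is Some i then \sum_(j in V2) A i j else 0.

Definition stars_of_weight A (w : R) : {set {set 'I_n}} :=
  [set V2 | is_star A V2 && star_weight_defined A V2 && (star_weight A V2 == w)].

Definition deg_stars A (w : R) : nat :=
  \sum_(V2 in stars_of_weight A w) (#|starV1 A V2| - 1).

End Graph.

From HB Require Import structures.
From mathcomp Require Import all_boot all_order all_algebra.
From mathcomp Require Import ring.
Set Implicit Arguments. Unset Strict Implicit. Unset Printing Implicit Defensive.
Import Order.TTheory GRing.Theory Num.Theory.
Local Open Scope ring_scope.

(* Two vertices i, r of the same star have equal rows in A, and when the star
   has weight w their strength is w; hence e_i - e_r is a left eigenvector of
   L = D - A for w.  Fix a representative r in each star of weight w and let P
   have rows e_i - e_r for the other vertices i of these stars and unit rows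
   elsewhere.  P is invertible, and the rows of P (X - L) indexed by the
   non-representatives are multiples of X - w, so (X - w)^deg divides
   det P * char_poly L. *)

Section EigenRows.
Variables (F : fieldType) (n : nat).

Lemma char_poly_mx_eigenrow (L P : 'M[F]_n) (w : F) i :
  row i P *m L = w *: row i P ->
  row i (map_mx polyC P *m char_poly_mx L) =
    ('X - w%:P) *: row i (map_mx polyC P).
Proof.
move=> eigPi.
rewrite /char_poly_mx mulmxBr mul_mx_scalar -map_mxM linearB linearZ /=.
by rewrite -map_row row_mul eigPi map_mxZ map_row scalerBl.
Qed.

Lemma card_eigenrows_le_mup (L P : 'M[F]_n) (S : {set 'I_n}) (w : F) :
  P \in unitmx -> {in S, forall i, row i P *m L = w *: row i P} ->
  (#|S| <= mup w (char_poly L))%N.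
Proof.
move=> uP eigP.
pose PX := map_mx polyC P.
pose D : 'rV[{poly F}]_n := \row_i (if i \in S then 'X - w%:P else 1).
pose Q := \matrix_i
  (if i \in S then row i PX else row i (PX *m char_poly_mx L)).
have factor : PX *m char_poly_mx L = diag_mx D *m Q.
  apply/row_matrixP => i.
  rewrite [RHS]row_mul row_diag_mx -scalemxAl -rowE rowK mxE.
  by case: ifPn => [/eigP/char_poly_mx_eigenrow//|_]; rewrite scale1r.
have detD : \det (diag_mx D) = ('X - w%:P) ^+ #|S|.
  rewrite det_diag -prodr_const (bigID (mem S)) /= [X in _ * X]big1 ?mulr1.
    by apply: eq_bigr => i iS; rewrite mxE iS.
  by move=> i /negPf iS; rewrite mxE iS.
have detP : \det P != 0 by rewrite -unitfE -unitmxE.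
rewrite mup_geq ?monic_neq0 ?char_poly_monic // -(dvdpZr _ _ detP) -mul_polyC.
by rewrite -det_map_mx -det_mulmx factor det_mulmx detD dvdp_mulr.
Qed.

End EigenRows.

Definition basis_diff_mx {F : fieldType} {n : nat} (S : {set 'I_n})
    (f : 'I_n -> 'I_n) : 'M[F]_n :=
  \matrix_i (if i \in S then 'e_i - 'e_(f i) else 'e_i).

Lemma basis_diff_mx_unit (F : fieldType) n (S : {set 'I_n}) (f : 'I_n -> 'I_n) :
  {in S, forall i, f i \notin S} -> (basis_diff_mx S f : 'M[F]_n) \in unitmx.
Proof.
move=> fS.
pose N : 'M[F]_n := \matrix_i (if i \in S then 'e_(f i) else 0).
have defP : basis_diff_mx S f = 1%:M - N.
  apply/row_matrixP => i; rewrite linearB /= !rowK row1.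
  by case: ifP; rewrite ?subr0.
have NN : N *m N = 0.
  apply/row_matrixP => i; rewrite row_mul row0 rowK.
  by case: ifPn => [/fS fiS|_]; rewrite ?mul0mx // -rowE rowK (negPf fiS).
have [] // := @mulmx1_unit _ _ (basis_diff_mx S f) (1%:M + N).
by rewrite defP mulmxBl !mulmxDr !mul1mx mulmx1 NN addr0 addrK.
Qed.

Section Stars.
Variables (R : realFieldType) (n : nat) (A : 'M[R]_n).

Lemma strength_nbhd i : strength A i = \sum_(j in nbhd A i) A i j.
Proof.
rewrite /strength (bigID (mem (nbhd A i))) /= [X in _ + X]big1 ?addr0 //.
by move=> j; rewrite inE negbK => /eqP.
Qed.

Lemma laplacian_twin_eigenrow (i r : 'I_n) (w : R) :
  row i A = row r A -> strength A r = w ->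
  ('e_i - 'e_r : 'rV_n) *m laplacian A = w *: ('e_i - 'e_r).
Proof.
move=> twin s_r.
have A_ir k : A i k = A r k.
  by have := congr1 (fun v : 'rV_n => v 0 k) twin; rewrite !mxE.
have s_i : strength A i = w by rewrite -s_r /strength; apply: eq_bigr => k _.
rewrite mulmxBl -!rowE; apply/rowP => k; rewrite !mxE s_i s_r A_ir.
rewrite eqxx [k == i]eq_sym [k == r]eq_sym.
by case: (i == k); case: (r == k) => /=; ring.
Qed.

Definition star_rep (i : 'I_n) : 'I_n :=
  odflt i [pick j in starV1 A (nbhd A i)].

Lemma pick_starV1_nbhd i : [pick j in starV1 A (nbhd A i)] = Some (star_rep i).
Proof.
rewrite /star_rep; case: pickP => [//|none].
by have := none i; rewrite inE eqxx.
Qed.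

Lemma nbhd_star_rep i : nbhd A (star_rep i) = nbhd A i.
Proof.
have := pick_starV1_nbhd i; case: pickP => // j + [<-].
by rewrite inE => /eqP.
Qed.

Lemma star_rep_eq i j : nbhd A i = nbhd A j -> star_rep i = star_rep j.
Proof.
by move=> same_nbhd; apply: Some_inj; rewrite -!pick_starV1_nbhd same_nbhd.
Qed.

Lemma star_rep_idem i : star_rep (star_rep i) = star_rep i.
Proof. exact/star_rep_eq/nbhd_star_rep. Qed.

Lemma row_star_rep i :
  star_weight_defined A (nbhd A i) -> row i A = row (star_rep i) A.
Proof.
move=> /forallP/(_ i)/implyP; rewrite inE eqxx => /(_ isT).
move=> /forallP/(_ (star_rep i))/implyP; rewrite inE nbhd_star_rep eqxx.
move=> /(_ isT)/forallP same_on_nbhd; apply/rowP => k; rewrite !mxE.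
have [k_nbhd|k_nbhd] := boolP (k \in nbhd A i).
  exact/eqP/(implyP (same_on_nbhd k)).
have k_nbhd_rep := k_nbhd; rewrite -nbhd_star_rep in k_nbhd_rep.
by move: k_nbhd k_nbhd_rep; rewrite !inE !negbK => /eqP -> /eqP ->.
Qed.

Lemma star_weight_nbhd i : star_weight A (nbhd A i) = strength A (star_rep i).
Proof.
by rewrite /star_weight pick_starV1_nbhd strength_nbhd nbhd_star_rep.
Qed.

Definition nonrep_star_vertices (w : R) : {set 'I_n} :=
  [set i | (nbhd A i \in stars_of_weight A w) && (star_rep i != i)].

Lemma star_rep_nonrep w i : star_rep i \notin nonrep_star_vertices w.
Proof. by rewrite inE star_rep_idem eqxx andbF. Qed.

Lemma card_starV1_gt1 w V2 :
  V2 \in stars_of_weight A w -> (1 < #|starV1 A V2|)%N.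
Proof. by rewrite inE => /andP [/andP [/andP [_ ->] _] _]. Qed.

Lemma deg_stars_gt0 w : stars_of_weight A w != set0 -> (0 < deg_stars A w)%N.
Proof.
case/set0Pn => V2 V2star; rewrite /deg_stars (bigD1 V2) //=.
by rewrite ltn_addr // subn_gt0 (card_starV1_gt1 V2star).
Qed.

Lemma deg_stars_card w : deg_stars A w = #|nonrep_star_vertices w|.
Proof.
rewrite /deg_stars -sum1_card.
rewrite (partition_big (nbhd A) (mem (stars_of_weight A w))); last first.
  by move=> i; rewrite inE => /andP [].
apply: eq_bigr => V2 V2star; rewrite sum1dep_card.
have [i0 i0V1] : exists i0, i0 \in starV1 A V2.
  by apply/card_gt0P; apply: ltnW; apply: card_starV1_gt1 V2star.
move: i0V1 V2star; rewrite inE => /eqP <- V2star.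
have repV1 : star_rep i0 \in starV1 A (nbhd A i0) by rewrite inE nbhd_star_rep.
rewrite [#|starV1 _ _|](cardD1 (star_rep i0)) repV1 add1n subn1.
apply: eq_card => x; rewrite !inE.
case: (eqVneq (nbhd A x) (nbhd A i0)) => [same_nbhd|]; last by rewrite !andbF.
move: V2star; rewrite inE same_nbhd (star_rep_eq same_nbhd) => -> /=.
by rewrite eq_sym.
Qed.

Lemma deg_stars_le_mup w :
  (deg_stars A w <= mup w (char_poly (laplacian A)))%N.
Proof.
rewrite deg_stars_card.
pose P : 'M[R]_n := basis_diff_mx (nonrep_star_vertices w) star_rep.
apply: (card_eigenrows_le_mup (P := P)).
  by apply: basis_diff_mx_unit => i _; apply: star_rep_nonrep.
move=> i iS; rewrite rowK iS; move: iS; rewrite inE => /andP [+ _].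
rewrite inE => /andP [/andP [_ weight_defined] /eqP weight_w].
apply: laplacian_twin_eigenrow; first exact: row_star_rep weight_defined.
by rewrite -star_weight_nbhd weight_w.
Qed.

End Stars.

Lemma eigenvalue_mup_gt0 (F : fieldType) n (L : 'M[F]_n) (w : F) :
  (0 < mup w (char_poly L))%N -> eigenvalue L w.
Proof. by rewrite eigenvalue_root_char; apply: contraLR => /mupNroot ->. Qed.

Theorem theorem1 (R : realFieldType) (n : nat) (A : 'M[R]_n) (wstar : R) :
  A^T = A ->
  (forall i, A i i = 0) ->
  (forall i j, 0 <= A i j) ->
  (forall i j, connect (adj A) i j) ->
  0 < wstar ->
  stars_of_weight A wstar != set0 ->
  eigenvalue (laplacian A) wstar /\
  (deg_stars A wstar <= mup wstar (char_poly (laplacian A)))%N.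
Proof.
move=> _ _ _ _ _ /deg_stars_gt0 deg_gt0; split; last exact: deg_stars_le_mup.
exact/eigenvalue_mup_gt0/(leq_trans deg_gt0)/deg_stars_le_mup.
Qed.
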